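(* Let $U\subset\mathbb{R}^n$ be open, let $u\in C^2(U)$ with $u>0$, and let $w=\log u$. Define $$Qw=\Delta w-\frac{D^2w(Dw,Dw)}{1+|Dw|^2}+|Dw|^2 .$$ Then $$\operatorname{div}\frac{u\,Du}{\sqrt{u^2+|Du|^2}}\ge 0 \iff Qw\ge 0,\qquad \operatorname{div}\frac{u\,Du}{\sqrt{u^2+|Du|^2}}\le 0 \iff Qw\le 0,$$ and $$\operatorname{div}\frac{u\,Du}{\sqrt{u^2+|Du|^2}}= 0 \iff Qw= 0 .$$
   Context: $Du$ denotes the gradient, $D^2w$ the Hessian of $w$, and $D^2w(Dw,Dw)=\sum_{i,j}\partial_i\partial_j w\,\partial_i w\,\partial_j w$. *)

From HB Require Import structures.
From mathcomp Require Import all_boot all_order all_algebra.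
From mathcomp Require Import all_classical all_reals all_analysis.
Set Implicit Arguments. Unset Strict Implicit. Unset Printing Implicit Defensive.
Import Order.TTheory GRing.Theory Num.Theory.
Import numFieldNormedType.Exports.
Local Open Scope classical_set_scope.
Local Open Scope ring_scope.

Section Defs.
Variables (R : realType) (n : nat).
Local Notation V := 'rV[R]_n.

Definition evec (i : 'I_n) : V := delta_mx 0 i.

Definition pd (f : V -> R) (i : 'I_n) : V -> R := fun x => derive f x (evec i).

Definition pd2 (f : V -> R) (i j : 'I_n) : V -> R := pd (pd f j) i.

Definition grad_sq (f : V -> R) (x : V) : R := \sum_(i < n) (pd f i x) ^+ 2.

Definition laplacian (f : V -> R) (x : V) : R := \sum_(i < n) pd2 f i i x.

Definition hess_grad_grad (f : V -> R) (x : V) : R :=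
  \sum_(i < n) \sum_(j < n) pd2 f i j x * pd f i x * pd f j x.

Definition divergence (F : 'I_n -> V -> R) (x : V) : R := \sum_(i < n) pd (F i) i x.

Definition C2_on (U : set V) (f : V -> R) : Prop :=
  forall x, U x ->
    [/\ {for x, continuous f},
        (forall i, derivable f x (evec i) /\ {for x, continuous (pd f i)}) &
        (forall i j, derivable (pd f j) x (evec i) /\ {for x, continuous (pd2 f i j)})].

Definition Qop (w : V -> R) (x : V) : R :=
  laplacian w x - hess_grad_grad w x / (1 + grad_sq w x) + grad_sq w x.

Definition flux (u : V -> R) : 'I_n -> V -> R :=
  fun i y => u y * pd u i y / Num.sqrt (u y ^+ 2 + grad_sq u y).

End Defs.

(** With [w = ln u] one has [Dw = Du / u] and [D^2 w = D^2 u / u - Du (x) Du / u^2].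
    Expanding both sides with these formulas gives the pointwise identity
    [div (u Du / sqrt (u^2 + |Du|^2)) = Qw * u^2 / sqrt (u^2 + |Du|^2)],
    and the factor [u^2 / sqrt (u^2 + |Du|^2)] is positive. *)

From HB Require Import structures.
From mathcomp Require Import all_boot all_order all_algebra.
From mathcomp Require Import all_classical all_reals all_analysis.
From mathcomp Require Import ring.
Import Order.TTheory GRing.Theory Num.Theory.
Import numFieldNormedType.Exports.
Set Implicit Arguments. Unset Strict Implicit. Unset Printing Implicit Defensive.
Local Open Scope classical_set_scope.
Local Open Scope ring_scope.

Section DirectionalDerivativeRules.
Variables (R : realType) (V : normedModType R).
Implicit Types (f g : V -> R) (x v : V) (a b : R).

Lemma is_derive_ext f g x v a :
  f =1 g -> is_derive x v f a -> is_derive x v g a.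
Proof. by move=> /funext ->. Qed.

Lemma is_derive_add f g x v a b : is_derive x v f a -> is_derive x v g b ->
  is_derive x v (fun y => f y + g y) (a + b).
Proof. by move=> fa gb; apply: is_derive_ext (is_deriveD fa gb). Qed.

Lemma is_derive_mul f g x v a b : is_derive x v f a -> is_derive x v g b ->
  is_derive x v (fun y => f y * g y) (f x * b + g x * a).
Proof. by move=> fa gb; apply: is_derive_ext (is_deriveM fa gb). Qed.

Lemma is_derive_sqr f x v a : is_derive x v f a ->
  is_derive x v (fun y => f y ^+ 2) (2 * f x * a).
Proof.
move=> fa; apply: (@is_derive_ext (fun y => f y * f y)) => [y|]; first by rewrite expr2.
by apply: is_derive_eq (is_derive_mul fa fa) _; ring.
Qed.

Lemma is_derive_inv f x v a : f x != 0 -> is_derive x v f a ->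
  is_derive x v (fun y => (f y)^-1) (- (f x) ^- 2 * a).
Proof. by move=> fx0 [fa <-]; split; [exact: derivableV | exact: deriveV]. Qed.

Lemma is_derive_sumr n (h : 'I_n -> V -> R) x v (dh : 'I_n -> R) :
  (forall i, is_derive x v (h i) (dh i)) ->
  is_derive x v (fun y => \sum_(i < n) h i y) (\sum_(i < n) dh i).
Proof. by move=> hd; apply: is_derive_ext (is_derive_sum hd) => y; rewrite fct_sumE. Qed.

Lemma derive_line f x v : 'D_v f x = 'D_1 (fun h : R => f (h *: v + x)) 0.
Proof.
rewrite /derive; set g1 := fun h => h^-1 *: _; set g2 := fun h => h^-1 *: _.
suff -> : g1 = g2 by [].
by apply/funext => h; rewrite /g1 /g2 /= addr0 scale0r add0r [_%:A]mulr1.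
Qed.

(* Only directional derivatives of [f] are available, so the chain rule is
   reduced to the one-variable one along the line [h |-> h v + x]. *)
Lemma is_derive_comp (g : R -> R) f x v a b :
  is_derive (f x) 1 g a -> is_derive x v f b ->
  is_derive x v (fun y => g (f y)) (a * b).
Proof.
move=> ga [/derivable1P fv <-].
have fx0 : (fun h : R => f (h *: v + x)) 0 = f x by rewrite scale0r add0r.
rewrite -fx0 in ga; have [gfv gfvE] := is_derive1_comp ga (derivableP fv).
by split; [exact/derivable1P | rewrite derive_line (derive_line f) -gfvE].
Qed.

End DirectionalDerivativeRules.

Lemma grad_sq_ge0 (R : realType) (n : nat) (f : 'rV[R]_n -> R) x : 0 <= grad_sq f x.
Proof. by apply: sumr_ge0 => i _; exact: sqr_ge0. Qed.

Section LogTransform.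
Variables (R : realType) (n : nat) (U : set 'rV[R]_n) (u : 'rV[R]_n -> R).
Hypotheses (openU : open U) (u_C2 : C2_on U u) (u_gt0 : forall x, U x -> 0 < u x).

Local Notation w := (fun y => ln (u y)).
Local Notation p i x := (pd u i x).

Lemma is_derive_pd x i : U x -> is_derive x (evec R i) u (p i x).
Proof. by move=> Ux; have [_ du _] := u_C2 Ux; apply: derivableP; case: (du i). Qed.

Lemma is_derive_pd2 x i j : U x -> is_derive x (evec R i) (pd u j) (pd2 u i j x).
Proof. by move=> Ux; have [_ _ d2u] := u_C2 Ux; apply: derivableP; case: (d2u i j). Qed.

Lemma is_derive_ln_comp x j : U x -> is_derive x (evec R j) w ((u x)^-1 * p j x).
Proof. by move=> Ux; apply: is_derive_comp (is_derive1_ln (u_gt0 Ux)) (is_derive_pd j Ux). Qed.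

Lemma pd_ln x j : U x -> pd w j x = (u x)^-1 * p j x.
Proof. by move=> /(is_derive_ln_comp j) []. Qed.

(* [pd w j] agrees with [u^-1 pd u j] only on [U]; openness makes this hold near [x]. *)
Lemma pd2_ln x i j : U x ->
  pd2 w i j x = (u x)^-1 * pd2 u i j x - (u x) ^- 2 * p i x * p j x.
Proof.
move=> Ux; rewrite /pd2 {1}/pd.
have nearU : \forall y \near x, U y by exact: open_nbhs_nbhs.
rewrite (@near_eq_derive _ _ _ _ (fun y => (u y)^-1 * p j y)); last first.
  by apply: filterS nearU => y; exact: pd_ln.
have [_ ->] := is_derive_mul (is_derive_inv (lt0r_neq0 (u_gt0 Ux)) (is_derive_pd i Ux))
  (is_derive_pd2 i j Ux).
by rewrite /pd2; ring.
Qed.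

Lemma grad_sq_ln x : U x -> grad_sq w x = (u x) ^- 2 * grad_sq u x.
Proof.
move=> Ux; rewrite /grad_sq mulr_sumr; apply: eq_bigr => i _.
by rewrite pd_ln // exprMn exprVn.
Qed.

Lemma laplacian_ln x : U x ->
  laplacian w x = (u x)^-1 * laplacian u x - (u x) ^- 2 * grad_sq u x.
Proof.
move=> Ux; rewrite /laplacian /grad_sq !mulr_sumr -sumrB; apply: eq_bigr => i _.
by rewrite pd2_ln //; ring.
Qed.

Lemma hess_grad_grad_ln x : U x ->
  hess_grad_grad w x = (u x) ^- 3 * hess_grad_grad u x - (u x) ^- 4 * grad_sq u x ^+ 2.
Proof.
move=> Ux; rewrite /hess_grad_grad /grad_sq expr2 mulr_suml !mulr_sumr -sumrB.
apply: eq_bigr => i _; rewrite !mulr_sumr -sumrB; apply: eq_bigr => j _.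
by rewrite pd2_ln // !pd_ln //; field; exact: lt0r_neq0 (u_gt0 Ux).
Qed.

Lemma is_derive_grad_sq x i : U x ->
  is_derive x (evec R i) (grad_sq u) (2 * \sum_(j < n) p j x * pd2 u i j x).
Proof.
move=> Ux; rewrite /grad_sq.
apply: is_derive_eq (is_derive_sumr (fun j => is_derive_sqr (is_derive_pd2 i j Ux))) _.
by rewrite mulr_sumr; apply: eq_bigr => j _; ring.
Qed.

Local Notation denom x := (Num.sqrt (u x ^+ 2 + grad_sq u x)).

Lemma sq_add_grad_sq_gt0 x : U x -> 0 < u x ^+ 2 + grad_sq u x.
Proof. by move=> Ux; rewrite ltr_pwDl ?grad_sq_ge0 // exprn_gt0 // u_gt0. Qed.

Lemma flux_denom_gt0 x : U x -> 0 < denom x.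
Proof. by move=> Ux; rewrite sqrtr_gt0 sq_add_grad_sq_gt0. Qed.

Lemma pd_flux x i : U x ->
  pd (flux u i) i x = (u x * pd2 u i i x + p i x ^+ 2) / denom x
    - u x * p i x * (u x * p i x + \sum_(j < n) p j x * pd2 u i j x) / denom x ^+ 3.
Proof.
move=> Ux; have S0 := sq_add_grad_sq_gt0 Ux; have denom0 := flux_denom_gt0 Ux.
have d_sq := is_derive_add (is_derive_sqr (is_derive_pd i Ux)) (is_derive_grad_sq i Ux).
have d_denom := is_derive_comp (f := fun y => u y ^+ 2 + grad_sq u y) (is_derive1_sqrt S0) d_sq.
rewrite {1}/pd /flux.
have [_ ->] := is_derive_mul (is_derive_mul (is_derive_pd i Ux) (is_derive_pd2 i i Ux))
  (is_derive_inv (f := fun y => denom y) (lt0r_neq0 denom0) d_denom).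
rewrite /pd2; field; exact: lt0r_neq0 denom0.
Qed.

Lemma divergence_flux x : U x ->
  divergence (flux u) x = (u x * laplacian u x + grad_sq u x) / denom x
    - u x * (u x * grad_sq u x + hess_grad_grad u x) / denom x ^+ 3.
Proof.
move=> Ux; rewrite /divergence (eq_bigr _ (fun i _ => pd_flux i Ux)).
rewrite sumrB -!mulr_suml /laplacian /grad_sq /hess_grad_grad.
congr (_ / _ - _ / _); first by rewrite big_split mulr_sumr.
rewrite [u x * \sum_(i < n) _]mulr_sumr -big_split mulr_sumr; apply: eq_bigr => i _ /=.
have -> : \sum_(j < n) pd2 u i j x * p i x * p j x = p i x * \sum_(j < n) p j x * pd2 u i j x.
  by rewrite mulr_sumr; apply: eq_bigr => j _; ring.
by ring.
Qed.

Lemma divergence_flux_Qop x : U x ->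
  divergence (flux u) x = Qop w x * (u x ^+ 2 / denom x).
Proof.
move=> Ux; have ux0 := lt0r_neq0 (u_gt0 Ux); have s0 := lt0r_neq0 (flux_denom_gt0 Ux).
have sE : denom x ^+ 2 = u x ^+ 2 + grad_sq u x by rewrite sqr_sqrtr // ltW // sq_add_grad_sq_gt0.
rewrite divergence_flux // /Qop laplacian_ln // hess_grad_grad_ln // grad_sq_ln //.
move: s0 sE; set s := denom x => s0 sE.
(* then [1 + |Dw|^2 = s^2 / u^2], which [field] sees is nonzero *)
have -> : grad_sq u x = s ^+ 2 - u x ^+ 2 by rewrite sE; ring.
field; rewrite s0 ux0 /=.
have -> : u x ^+ 2 + (s ^+ 2 - u x ^+ 2) = s ^+ 2 by ring.
exact: expf_neq0.
Qed.

End LogTransform.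

Theorem mainTheorem1 (R : realType) (n : nat) (U : set 'rV[R]_n)
  (u : 'rV[R]_n -> R) :
  open U -> C2_on U u -> (forall x, U x -> 0 < u x) ->
  let w := fun y => ln (u y) in
  forall x, U x ->
    [/\ (0 <= divergence (flux u) x <-> 0 <= Qop w x),
        (divergence (flux u) x <= 0 <-> Qop w x <= 0) &
        (divergence (flux u) x = 0 <-> Qop w x = 0)].
Proof.
move=> openU u_C2 u_gt0 w x Ux.
have c_gt0 : 0 < u x ^+ 2 / Num.sqrt (u x ^+ 2 + grad_sq u x).
  by rewrite divr_gt0 ?exprn_gt0 ?u_gt0 // (flux_denom_gt0 u_gt0 Ux).
rewrite (divergence_flux_Qop openU u_C2 u_gt0 Ux) pmulr_lge0 // pmulr_lle0 //.
by split=> //; split=> [/eqP|->]; rewrite ?mul0r // mulf_eq0 (gt_eqF c_gt0) orbF => /eqP.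
Qed.
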